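(* Let $b'>\delta$ be fixed. For a query $\mathbf Q=(\mathbf q,v)$ with $v\in(0,\infty)$, put $b=\sqrt{v/2}$, $P(\mathbf Q)=\frac{\gamma b'}{b(b'-\delta)}\sum_{i=1}^nc_i|q_i|$, $s_i=\gamma|q_i|$, $s_i'=\frac{\gamma b'\delta|q_i|}{b(b'-\delta)}$, and define the randomized price and micro-payments $\pi(\mathbf Q)=\mathcal K'_{\mathbf Q}(\mathbf c)=P(\mathbf Q)+\rho'$, and $\mu_i(\mathbf Q)=\left(\frac{s_i}{b}+\frac{s_i'}{b'}\right)c_i+\frac{\pi(\mathbf Q)-P(\mathbf Q)}{n}$ for $i=1,\ldots,n$. Then the framework is balanced in expectation, namely: (a) $\mathbf Q\mapsto\mathbb E[\pi(\mathbf Q)]$ is arbitrage-free; (b) for each $i$, if $q_i=0$ then $\mathbb E[\mu_i(\mathbf Q)]=0$; (c) for each $i$, $\mathbf Q\mapsto\mathbb E[\mu_i(\mathbf Q)]$ is arbitrage-free; (d) $\sum_{i=1}^n\mathbb E[\mu_i(\mathbf Q)]\le\mathbb E[\pi(\mathbf Q)]$ for every query $\mathbf Q$; (e) for each $i$ and every query $\mathbf Q$, $\mathbb E[\mu_i(\mathbf Q)]\ge c_i\,(\varepsilon_i(\mathcal K_{\mathbf Q})+\varepsilon_i(\mathcal K'_{\mathbf Q}))$.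
   Context: Fix a bounded $X\subseteq\mathbb R$, $\gamma=\sup_{x\in X}|x|$; data items $x_i\in X$, databases $\mathbf x\in X^n$. Each owner $i$ has a linear contract $W_i(\varepsilon)=c_i\varepsilon$ with constant $c_i\in Y$, where $Y\subseteq[0,\infty)$ is bounded and $\delta=\sup_{c\in Y}|c|$; $\mathbf c=(c_1,\ldots,c_n)\in Y^n$. For a vector $\mathbf z$, $\mathbf z^{(i)}$ denotes $\mathbf z$ with the $i$-th coordinate set to $0$. Queries are pairs $\mathbf Q=(\mathbf q,v)$ with $\mathbf q\in\mathbb R^n$, $v\in(0,\infty)$; $b=\sqrt{v/2}$. $\mathrm{Lap}(\beta)$ is the distribution with density $\frac{1}{2\beta}e^{-|t|/\beta}$. The query mechanism is $\mathcal K_{\mathbf Q}(\mathbf x)=\mathbf q\cdot\mathbf x+\rho$ with $\rho\sim\mathrm{Lap}(b)$; the price mechanism is $\mathcal K'_{\mathbf Q}(\mathbf c)=\frac{\gamma b'}{b(b'-\delta)}\sum_ic_i|q_i|+\rho'$ with $\rho'\sim\mathrm{Lap}(b')$, independent of $\rho$. Privacy losses: $\varepsilon_i(\mathcal K_{\mathbf Q})=\sup_{S,\mathbf x\in X^n}\left|\log\frac{\Pr[\mathcal K_{\mathbf Q}(\mathbf x)\in S]}{\Pr[\mathcal K_{\mathbf Q}(\mathbf x^{(i)})\in S]}\right|$ and $\varepsilon_i(\mathcal K'_{\mathbf Q})=\sup_{S,\mathbf c\in Y^n}\left|\log\frac{\Pr[\mathcal K'_{\mathbf Q}(\mathbf c)\in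 S]}{\Pr[\mathcal K'_{\mathbf Q}(\mathbf c^{(i)})\in S]}\right|$, suprema also over measurable $S\subseteq\mathbb R$. The determinacy relation $\mathbf S\rightarrow\mathbf Q$ is the smallest relation satisfying: (Summation) $\{(\mathbf q_1,v_1),\ldots,(\mathbf q_k,v_k)\}\rightarrow(\sum_j\mathbf q_j,\sum_jv_j)$; (Scalar multiplication) $\{(\mathbf q,v)\}\rightarrow(c\mathbf q,c^2v)$ for $c\in\mathbb R$; (Relaxation) $\{(\mathbf q,v)\}\rightarrow(\mathbf q,v')$ for $v\le v'$; (Transitivity) if $\mathbf S_j\rightarrow\mathbf Q_j$ for all $j$ and $\{\mathbf Q_1,\ldots,\mathbf Q_k\}\rightarrow\mathbf Q$ then $\mathbf S_1\uplus\cdots\uplus\mathbf S_k\rightarrow\mathbf Q$. A real function $g$ on queries with $v\in(0,\infty)$ is arbitrage-free if for every $m\ge1$ and such queries with $\{\mathbf Q_1,\ldots,\mathbf Q_m\}\rightarrow\mathbf Q$, $g(\mathbf Q)\le\sum_jg(\mathbf Q_j)$. *)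

From HB Require Import structures.
From mathcomp Require Import all_boot all_order all_algebra.
From mathcomp Require Import all_classical all_reals all_analysis.
Set Implicit Arguments. Unset Strict Implicit. Unset Printing Implicit Defensive.
Import Order.TTheory GRing.Theory Num.Theory.
Import numFieldNormedType.Exports.
Local Open Scope classical_set_scope.
Local Open Scope ring_scope.

Section Defs.
Variables (R : realType) (n : nat).

Definition query := ('rV[R]_n * R)%type.

Definition qb (Q : query) : R := Num.sqrt (Q.2 / 2).

Definition gammaX (X : set R) : R := sup [set `|x| | x in X].
Definition deltaY (Y : set R) : R := sup [set `|y| | y in Y].

Definition zero_at (z : 'rV[R]_n) (i : 'I_n) : 'rV[R]_n :=
  \row_j (if j == i then 0 else z ord0 j).

Definition lap_pdf (beta t : R) : R := expR (- `|t| / beta) / (2 * beta).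

Definition lap_prob (beta m : R) (S : set R) : \bar R :=
  (\int[@lebesgue_measure R]_(t in S) (lap_pdf beta (t - m))%:E)%E.

Definition lapE (beta : R) (f : R -> R) : \bar R :=
  (\int[@lebesgue_measure R]_t (f t * lap_pdf beta t)%:E)%E.

(* Privacy loss of owner i for the mechanism z |-> M z + rho, rho ~ Lap(beta),
   with inputs z ranging over D^n:
   sup over measurable S and z in D^n of |log (Pr[K(z) in S] / Pr[K(z^(i)) in S])|
   (the sup is over the S for which the ratio is defined, i.e. both
   probabilities are positive). *)
Definition privacy_loss (D : set R) (M : 'rV[R]_n -> R) (beta : R)
    (i : 'I_n) : \bar R :=
  ereal_sup [set e : \bar R | exists (S : set R) (z : 'rV[R]_n),
    [/\ measurable S, (forall j, D (z ord0 j)),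
        (0 < lap_prob beta (M z) S)%E,
        (0 < lap_prob beta (M (zero_at z i)) S)%E &
        e = (`| ln (fine (lap_prob beta (M z) S)
                    / fine (lap_prob beta (M (zero_at z i)) S)) |)%:E]].

(* the query mechanism K_Q(x) = q . x + rho, rho ~ Lap(b) *)
Definition K_mean (Q : query) (x : 'rV[R]_n) : R :=
  \sum_(j < n) Q.1 ord0 j * x ord0 j.

Definition Pcoef (gamma delta b' : R) (Q : query) : R :=
  gamma * b' / (qb Q * (b' - delta)).

Definition K'_mean (gamma delta b' : R) (Q : query) (c : 'rV[R]_n) : R :=
  Pcoef gamma delta b' Q * \sum_(j < n) c ord0 j * `|Q.1 ord0 j|.

Definition Pprice (gamma delta b' : R) (c : 'rV[R]_n) (Q : query) : R :=
  K'_mean gamma delta b' Q c.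

Definition Eprice (gamma delta b' : R) (c : 'rV[R]_n) (Q : query) : \bar R :=
  lapE b' (fun t => Pprice gamma delta b' c Q + t).

Definition Emicro (gamma delta b' : R) (c : 'rV[R]_n) (i : 'I_n) (Q : query)
    : \bar R :=
  let s := gamma * `|Q.1 ord0 i| in
  let s' := gamma * b' * delta * `|Q.1 ord0 i| / (qb Q * (b' - delta)) in
  lapE b' (fun t =>
    (s / qb Q + s' / b') * c ord0 i
    + ((Pprice gamma delta b' c Q + t) - Pprice gamma delta b' c Q) / n%:R).

(* determinacy relation S -> Q on (multi)sets of queries, represented as
   sequences; closure under permutation is built into Transitivity. *)
Inductive determ : seq query -> query -> Prop :=
| det_sum (S : seq query) : (0 < size S)%N ->
    determ S (\sum_(Q <- S) Q.1, \sum_(Q <- S) Q.2)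
| det_scale (q : 'rV[R]_n) (v a : R) : determ [:: (q, v)] (a *: q, a ^+ 2 * v)
| det_relax (q : 'rV[R]_n) (v v' : R) : v <= v' -> determ [:: (q, v)] (q, v')
| det_trans (Ss : seq (seq query)) (Qs : seq query) (Q : query) (S : seq query) :
    size Ss = size Qs -> (0 < size Qs)%N ->
    (forall j, (j < size Qs)%N -> determ (nth [::] Ss j) (nth (0, 0) Qs j)) ->
    determ Qs Q -> perm_eq S (flatten Ss) -> determ S Q.

Definition arbitrage_free (g : query -> \bar R) : Prop :=
  forall (S : seq query) (Q : query),
    (0 < size S)%N -> (forall Q', Q' \in S -> 0 < Q'.2) -> 0 < Q.2 ->
    determ S Q -> (g Q <= \sum_(Q' <- S) g Q')%E.

End Defs.

From HB Require Import structures.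
From mathcomp Require Import all_boot all_order all_algebra.
From mathcomp Require Import all_classical all_reals all_analysis.
From mathcomp Require Import measurable_realfun ftc exponential_distribution.
From mathcomp Require Import ring lra.
Import Order.TTheory GRing.Theory Num.Theory.
Import numFieldTopology.Exports.
Local Open Scope classical_set_scope.
Local Open Scope ring_scope.

(* Laplace noise has mean zero, so E[pi(Q)] = P(Q) and
   E[mu_i(Q)] = kappa c_i |q_i| / b with kappa = gamma b' / (b' - delta); in
   particular the micro-payments add up to the expected price.  Each of these
   expectations has the shape (sum_j w_j |q_j|) / sqrt (v / 2) with w >= 0,
   and every such function is arbitrage-free: it is subadditive under
   Summation, invariant under Scalar multiplication (the factors |a| cancel)
   and nonincreasing in v, hence under Relaxation.  Finally, a Laplace
   mechanism of scale beta whose mean moves by at most s when one input is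
   zeroed has privacy loss at most s / beta; the sensitivities gamma |q_i| of
   K_Q and (gamma b' / (b (b' - delta))) delta |q_i| of K'_Q give exactly
   c_i (s_i / b + s'_i / b') = E[mu_i(Q)]. *)

Section reflection.
Context {R : realType}.
Notation mu := (@lebesgue_measure R).

Lemma ge0_integral_halflines (f : R -> R) : (forall x, 0 <= f x) -> continuous f ->
  (\int[mu]_x (f x)%:E = \int[mu]_(x in `[0%R, +oo[) (f x)%:E
                         + \int[mu]_(x in `[0%R, +oo[) (f (- x))%:E)%E.
Proof.
move=> f0 cf.
have mf : measurable_fun [set: R] f by exact: continuous_measurable_fun.
have mge0 : measurable [set x : R | 0 <= x] by rewrite -set_itvcy.
rewrite -(setUv [set x : R | 0 <= x]) ge0_integral_setU//=; last 4 first.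
- exact: measurableC.
- by apply/measurable_EFinP; rewrite setUv.
- by move=> x _; rewrite lee_fin.
- exact/disj_setPCl.
rewrite -set_itvcy setCitvr; congr (_ + _)%E.
rewrite integral_itv_bndo_bndc; last exact/measurable_EFinP/measurable_funTS.
rewrite -{1}oppr0 ge0_integration_by_substitutionNy//.
exact: continuous_subspaceT.
Qed.

Lemma ge0_integral_reflect (f : R -> R) : (forall x, 0 <= f x) -> continuous f ->
  (\int[mu]_x (f (- x))%:E = \int[mu]_x (f x)%:E)%E.
Proof.
move=> f0 cf; have cfN : continuous (f \o -%R).
  move=> x; apply: continuous_comp; last exact: cf.
  exact: (@continuousN _ R^o R^o (fun y => y) x cvg_id).
rewrite (@ge0_integral_halflines (f \o -%R) (fun x => f0 (- x)) cfN) ge0_integral_halflines//.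
rewrite addeC; congr (_ + _)%E.
by apply: eq_integral => x _; rewrite /= opprK.
Qed.

Lemma integral_odd (f : R -> R) : continuous f -> mu.-integrable setT (EFin \o f) ->
  (forall x, f (- x) = - f x) -> (\int[mu]_x (f x)%:E = 0)%E.
Proof.
move=> cf intf fN.
have cpos : continuous (fun x => Num.max (f x) 0).
  by move=> x; apply: (@continuous_max _ _ f (fun=> 0)); [exact: cf | exact: cvg_cst].
have pos_ge0 x : 0 <= Num.max (f x) 0 by rewrite le_max lexx orbT.
rewrite integralE.
have -> : (\int[mu]_x ((EFin \o f)^\- x) = \int[mu]_x ((EFin \o f)^\+ x))%E.
  transitivity (\int[mu]_x (Num.max (f (- x)) 0)%:E)%E.
    by apply: eq_integral => x _; rewrite funenegE /= fN EFin_max.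
  rewrite (ge0_integral_reflect _ pos_ge0 cpos).
  by apply: eq_integral => x _; rewrite funeposE EFin_max.
exact/subee/(integrable_pos_fin_num measurableT intf).
Qed.

End reflection.

Section laplace.
Context {R : realType}.
Notation mu := (@lebesgue_measure R).

Lemma lap_pdf_ge0 (b t : R) : 0 <= b -> 0 <= lap_pdf b t.
Proof. by move=> b0; rewrite /lap_pdf divr_ge0 ?expR_ge0 ?mulr_ge0. Qed.

Lemma lap_pdfN (b t : R) : lap_pdf b (- t) = lap_pdf b t.
Proof. by rewrite /lap_pdf normrN. Qed.

Lemma continuous_lap_pdf (b : R) : continuous (lap_pdf b).
Proof.
move=> x; rewrite /lap_pdf.
apply: (@continuousM _ R^o (fun t => expR (- `|t| / b)) (fun=> (2 * b)^-1)).
  apply: continuous_comp; last exact: continuous_expR.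
  apply: (@continuousM _ R^o (fun t => - `|t|) (fun=> b^-1)); last exact: cvg_cst.
  exact/(@continuousN _ R^o R^o)/norm_continuous.
exact: cvg_cst.
Qed.

Lemma lap_pdf_exponential (b t : R) : 0 < b -> 0 <= t ->
  lap_pdf b t = 2^-1 * exponential_pdf b^-1 t.
Proof.
move=> b0 t0; rewrite exponential_pdfE// /lap_pdf ger0_norm// mulNr (mulrC t).
by rewrite mulNr invfM; ring.
Qed.

Lemma integral_lap_pdf (b : R) : 0 < b -> (\int[mu]_x (lap_pdf b x)%:E = 1)%E.
Proof.
move=> b0; have b0' : 0 < b^-1 by rewrite invr_gt0.
have half : (\int[mu]_(x in `[0%R, +oo[) (lap_pdf b x)%:E = (2^-1)%:E)%E.
  transitivity ((2^-1)%:E * \int[mu]_x (exponential_pdf b^-1 x)%:E)%E; last first.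
    by rewrite integral_exponential_pdf// mule1.
  rewrite -ge0_integralZl//; last first.
  - by move=> x _; rewrite lee_fin exponential_pdf_ge0// ltW.
  - by apply/measurable_EFinP; exact: measurable_exponential_pdf.
  rewrite [LHS]integral_mkcond; apply: eq_integral => x _; rewrite patchE -EFinM.
  case: ifPn; first by rewrite inE/= in_itv/= andbT => /lap_pdf_exponential ->.
  move=> /negP; rewrite inE/= in_itv/= andbT => /negP; rewrite -ltNge.
  by move=> /lt0_exponential_pdf ->; rewrite mulr0.
rewrite ge0_integral_halflines; last exact: continuous_lap_pdf.
  under [X in (_ + X)%E]eq_integral do rewrite lap_pdfN.
  by rewrite half -EFinD -[X in (X + _)%R]div1r -[X in (_ + X)%R]div1r -splitr.
by move=> x; rewrite lap_pdf_ge0 // ltW.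
Qed.

Lemma integrable_lap_pdf (b : R) : 0 < b -> mu.-integrable setT (EFin \o lap_pdf b).
Proof.
move=> b0; apply/integrableP; split.
  by apply/measurable_EFinP; exact: continuous_measurable_fun (continuous_lap_pdf b).
under eq_integral do rewrite /= ger0_norm ?lap_pdf_ge0 ?ltW//.
by rewrite integral_lap_pdf // ltry.
Qed.

(* From [u <= exp u] at [u = |t| / (2 b)]: a Laplace variable has a first moment. *)
Lemma abs_mul_lap_pdf_le (b t : R) : 0 < b ->
  `|t * lap_pdf b t| <= 4 * b * lap_pdf (2 * b) t.
Proof.
move=> b0; set u := `|t| / (2 * b).
have u_le : u <= expR u by apply: le_trans (expR_ge1Dx u); rewrite lerDr.
have expNu_gt0 : 0 < expR (- u) := expR_gt0 _.
have expuNu : expR u * expR (- u) = 1 by rewrite expRxMexpNx_1.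
rewrite normrM (ger0_norm (lap_pdf_ge0 _ _ (ltW b0))) /lap_pdf.
have -> : expR (- `|t| / b) = expR (- u) * expR (- u).
  by rewrite -expRD; congr expR; rewrite /u; field; exact: lt0r_neq0.
rewrite mulNr -/u.
have -> : `|t| = u * (2 * b) by rewrite /u divfK // mulf_neq0 // lt0r_neq0.
have -> : 4 * b * (expR (- u) / (2 * (2 * b))) = expR (- u).
  by field; exact: lt0r_neq0.
have -> : u * (2 * b) * (expR (- u) * expR (- u) / (2 * b)) =
    u * expR (- u) * expR (- u) by field; exact: lt0r_neq0.
nra.
Qed.

Lemma continuous_id_mul_lap_pdf (b : R) : continuous (fun t : R => t * lap_pdf b t).
Proof.
move=> x; apply: (@continuousM _ R^o (fun t => t) (lap_pdf b)); first exact: cvg_id.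
exact: continuous_lap_pdf.
Qed.

Lemma integrable_id_lap_pdf (b : R) : 0 < b ->
  mu.-integrable setT (fun t => (t * lap_pdf b t)%:E).
Proof.
move=> b0; have b0' : 0 < 2 * b by rewrite mulr_gt0.
apply: (@le_integrable _ _ _ mu setT measurableT _
  (fun t => ((4 * b)%:E * (lap_pdf (2 * b) t)%:E)%E)).
- apply/measurable_EFinP; exact: continuous_measurable_fun (continuous_id_mul_lap_pdf b).
- move=> x _; rewrite -EFinM !abse_EFin lee_fin [X in _ <= X]ger0_norm.
    exact: abs_mul_lap_pdf_le.
  by rewrite mulr_ge0 ?lap_pdf_ge0 ?mulr_ge0 ?ltW.
- by apply: integrableZl => //; exact: integrable_lap_pdf.
Qed.

Lemma integral_id_lap_pdf (b : R) : 0 < b ->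
  (\int[mu]_t (t * lap_pdf b t)%:E = 0)%E.
Proof.
move=> b0; apply: integral_odd; last by move=> x; rewrite lap_pdfN mulNr.
- exact: continuous_id_mul_lap_pdf.
- exact: integrable_id_lap_pdf.
Qed.

Lemma lapE_affine (b A k : R) : 0 < b -> lapE b (fun t => A + t * k) = A%:E.
Proof.
move=> b0; rewrite /lapE.
under eq_integral do rewrite mulrDl EFinD (mulrC _ k) -mulrA !EFinM.
rewrite integralD //; last 2 first.
- by apply: integrableZl => //; exact: integrable_lap_pdf.
- by apply: integrableZl => //; exact: integrable_id_lap_pdf.
rewrite integralZl //; last exact: integrable_lap_pdf.
rewrite integralZl //; last exact: integrable_id_lap_pdf.
by rewrite integral_lap_pdf // integral_id_lap_pdf // mule1 mule0 adde0.
Qed.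

End laplace.

Section weighted_price.
Context {R : realType} {n : nat}.
Variable w : 'I_n -> R.
Hypothesis w_ge0 : forall j, 0 <= w j.

Definition wnorm (q : 'rV[R]_n) : R := \sum_(j < n) w j * `|q ord0 j|.

Definition wprice (Q : query R n) : R := wnorm Q.1 / qb Q.

(* Scaling by [0] turns any query into [(0, 0)], whose [qb] vanishes and whose
   price is the junk value [0 / 0 = 0]; admissibility is the invariant that
   keeps such degenerate queries harmless. *)
Definition admissible (Q : query R n) : Prop := 0 <= Q.2 /\ (Q.2 = 0 -> Q.1 = 0).

Lemma wnorm_ge0 q : 0 <= wnorm q.
Proof. by apply: sumr_ge0 => j _; rewrite mulr_ge0. Qed.

Lemma wnorm0 : wnorm 0 = 0.
Proof. by rewrite /wnorm big1 // => j _; rewrite mxE normr0 mulr0. Qed.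

Lemma wnormD q1 q2 : wnorm (q1 + q2) <= wnorm q1 + wnorm q2.
Proof.
rewrite /wnorm -big_split /=; apply: ler_sum => j _.
by rewrite mxE -mulrDr ler_wpM2l // ler_normD.
Qed.

Lemma wnorm_sum (I : Type) (s : seq I) (F : I -> 'rV[R]_n) :
  wnorm (\sum_(i <- s) F i) <= \sum_(i <- s) wnorm (F i).
Proof.
apply: (big_ind2 (fun q r => wnorm q <= r)) => [|q1 r1 q2 r2 h1 h2 //|//].
  by rewrite wnorm0.
exact: le_trans (wnormD q1 q2) (lerD h1 h2).
Qed.

Lemma wnormZ a q : wnorm (a *: q) = `|a| * wnorm q.
Proof. by rewrite /wnorm mulr_sumr; apply: eq_bigr => j _; rewrite mxE normrM mulrCA. Qed.

Lemma wprice_ge0 Q : 0 <= wprice Q.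
Proof. by rewrite divr_ge0 ?wnorm_ge0 ?sqrtr_ge0. Qed.

Lemma wprice_relax q v V : admissible (q, v) -> v <= V -> wprice (q, V) <= wprice (q, v).
Proof.
move=> [/= v_ge0 v0_q0] vV; have [v0|v_neq0] := eqVneq v 0.
  by rewrite /wprice /= (v0_q0 v0) wnorm0 !mul0r.
have v_gt0 : 0 < v by rewrite lt_neqAle eq_sym v_neq0.
rewrite ler_wpM2l ?wnorm_ge0 // lef_pV2 ?posrE ?sqrtr_gt0 ?divr_gt0 //.
  have V_ge0 : 0 <= V by exact: le_trans vV.
  by rewrite /qb ler_sqrt ?divr_ge0 // ler_pM2r ?invr_gt0.
by rewrite /= (lt_le_trans v_gt0 vV).
Qed.

Lemma le_sum_var (S : seq (query R n)) Q :
  (forall Q', Q' \in S -> admissible Q') -> Q \in S -> Q.2 <= \sum_(Q' <- S) Q'.2.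
Proof.
move=> adm QS; rewrite (big_rem Q) //= lerDl big_seq sumr_ge0 // => Q' /mem_rem.
by case/adm.
Qed.

Lemma admissible_sum (S : seq (query R n)) :
  (forall Q, Q \in S -> admissible Q) ->
  admissible (\sum_(Q <- S) Q.1, \sum_(Q <- S) Q.2).
Proof.
move=> adm; split => /=; first by rewrite big_seq sumr_ge0 // => Q /adm [].
move=> sum0; rewrite big_seq big1 // => Q QS; have [Q_ge0 Q0_q0] := adm Q QS.
by apply: Q0_q0; apply/le_anti; rewrite Q_ge0 -sum0 le_sum_var.
Qed.

Lemma wprice_sum_le (S : seq (query R n)) :
  (forall Q, Q \in S -> admissible Q) ->
  wprice (\sum_(Q <- S) Q.1, \sum_(Q <- S) Q.2) <= \sum_(Q <- S) wprice Q.
Proof.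
move=> adm; rewrite /wprice /=.
have qb_inv_ge0 (Q : query R n) : 0 <= (qb Q)^-1 by rewrite invr_ge0 sqrtr_ge0.
apply: le_trans (ler_wpM2r (qb_inv_ge0 _) (wnorm_sum _ S fst)) _.
rewrite mulr_suml big_seq [leRHS]big_seq; apply: ler_sum => -[q v] QS.
exact: (wprice_relax _ _ _ (adm _ QS) (le_sum_var _ _ adm QS)).
Qed.

Lemma admissible_scale q v a : admissible (q, v) -> admissible (a *: q, a ^+ 2 * v).
Proof.
move=> [/= v_ge0 v0_q0]; split => /=; first by rewrite mulr_ge0 ?sqr_ge0.
move/eqP; rewrite mulf_eq0 sqrf_eq0 => /orP[/eqP->|/eqP/v0_q0->].
  by rewrite scale0r.
by rewrite scaler0.
Qed.

Lemma wprice_scale_le q v a : wprice (a *: q, a ^+ 2 * v) <= wprice (q, v).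
Proof.
have [->|a_neq0] := eqVneq a 0.
  by rewrite /wprice /= scale0r wnorm0 mul0r; exact: (wprice_ge0 (q, v)).
rewrite /wprice /qb /= wnormZ -mulrA sqrtrM ?sqr_ge0 // sqrtr_sqr invfM.
by rewrite mulrACA mulfV ?normr_eq0 // mul1r.
Qed.

Lemma admissible_relax q v V : admissible (q, v) -> v <= V -> admissible (q, V).
Proof.
move=> [/= v_ge0 v0_q0] vV; split => /= [|V0]; first exact: le_trans vV.
by apply: v0_q0; apply/le_anti; rewrite v_ge0 -V0 vV.
Qed.

Lemma determ_wprice_le S Q : determ S Q -> (forall Q', Q' \in S -> admissible Q') ->
  admissible Q /\ wprice Q <= \sum_(Q' <- S) wprice Q'.
Proof.
elim=> {S Q}.
- by move=> S _ adm; split; [exact: admissible_sum | exact: wprice_sum_le].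
- move=> q v a /(_ _ (mem_head _ _)) adm.
  by rewrite big_seq1; split; [exact: admissible_scale | exact: wprice_scale_le].
- move=> q v V vV /(_ _ (mem_head _ _)) adm.
  by rewrite big_seq1; split; [exact: admissible_relax adm vV | exact: wprice_relax].
move=> Ss Qs Q S sizeSs _ _ IHs _ IHQ permS adm.
have admSs j : (j < size Qs)%N -> forall Q', Q' \in nth [::] Ss j -> admissible Q'.
  move=> js Q' Q'j; apply: adm; rewrite (perm_mem permS).
  by apply/flattenP; exists (nth [::] Ss j) => //; apply: mem_nth; rewrite sizeSs.
have [admQ leQ] : admissible Q /\ wprice Q <= \sum_(Q' <- Qs) wprice Q'.
  apply: IHQ => Q' /(nthP (0, 0)) [j js <-].
  by case: (IHs j js (admSs j js)).
split => //; apply: le_trans leQ _.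
rewrite (perm_big _ permS) big_flatten /= (big_nth (0, 0)) (big_nth [::]) sizeSs.
rewrite !big_mkord; apply: ler_sum => j _.
by case: (IHs j (ltn_ord j) (admSs j (ltn_ord j))).
Qed.

Lemma arbitrage_free_wprice : arbitrage_free (fun Q => (wprice Q)%:E).
Proof.
move=> S Q _ S_gt0 _ /determ_wprice_le detQ.
have [|_] := detQ => [Q' /S_gt0 Q'_gt0|le]; last by rewrite sumEFin lee_fin.
by split => [|Q'0]; [exact: ltW | move: Q'_gt0; rewrite Q'0 ltxx].
Qed.

End weighted_price.

Section privacy.
Context {R : realType}.

Lemma lap_pdf_shift_le (b m1 m2 t : R) : 0 < b ->
  lap_pdf b (t - m1) <= expR (`|m1 - m2| / b) * lap_pdf b (t - m2).
Proof.
move=> b0; rewrite /lap_pdf mulrA -expRD ler_pM2r ?invr_gt0 ?mulr_gt0 //.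
rewrite ler_expR -mulrDl ler_pM2r ?invr_gt0 //.
have := ler_normD (t - m1) (m1 - m2); rewrite addrA subrK; lra.
Qed.

Lemma lap_prob_shift_le (b m1 m2 : R) (S : set R) : 0 < b -> measurable S ->
  (lap_prob b m1 S <= (expR (`|m1 - m2| / b))%:E * lap_prob b m2 S)%E.
Proof.
move=> b0 mS; have mf m : measurable_fun S (fun t => (lap_pdf b (t - m))%:E).
  have cf : continuous (fun t : R => lap_pdf b (t - m)).
    move=> x; apply: (@continuous_comp _ _ _ (fun t : R => t - m) (lap_pdf b)).
      by apply: cvgD; [exact: cvg_id | exact: cvg_cst].
    exact: continuous_lap_pdf.
  by apply/measurable_EFinP/measurable_funTS; exact: continuous_measurable_fun cf.
rewrite /lap_prob -(ge0_integralZl (@lebesgue_measure R) mS (mf m2)) //.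
  apply: ge0_le_integral => //.
  - by move=> x _; rewrite lee_fin lap_pdf_ge0 // ltW.
  - exact: mf.
  - by apply: measurable_funeM; exact: mf.
  - by move=> x _; rewrite -EFinM lee_fin lap_pdf_shift_le.
by move=> x _; rewrite lee_fin lap_pdf_ge0 // ltW.
Qed.

Lemma abs_ln_ratio_le (a c : \bar R) (L : R) : 0 <= L -> (0 < a)%E -> (0 < c)%E ->
  (a <= (expR L)%:E * c)%E -> (c <= (expR L)%:E * a)%E ->
  `|ln (fine a / fine c)| <= L.
Proof.
case: a c => [x| |] // [y| |] //= L_ge0; rewrite ?lte_fin; last first.
  by move=> _ _; rewrite invr0 mulr0 ln0 ?normr0.
move=> x_gt0 y_gt0; rewrite -!EFinM !lee_fin => xy yx.
have eL_gt0 : 0 < expR L := expR_gt0 L.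
rewrite ler_norml; apply/andP; split.
  rewrite -[X in X <= _]expRK ler_ln ?posrE ?expR_gt0 ?divr_gt0 // expRN.
  by rewrite -(ler_pM2l eL_gt0) mulfV ?gt_eqF // mulrA ler_pdivlMr // mul1r.
rewrite -[X in _ <= X]expRK ler_ln ?posrE ?expR_gt0 ?divr_gt0 //.
by rewrite ler_pdivrMr // mulrC.
Qed.

Lemma privacy_loss_le {n : nat} (D : set R) (M : 'rV[R]_n -> R) (beta : R)
    (i : 'I_n) (s : R) : 0 < beta ->
  (forall z : 'rV_n, (forall j, D (z ord0 j)) -> `|M z - M (zero_at z i)| <= s) ->
  (privacy_loss D M beta i <= (s / beta)%:E)%E.
Proof.
move=> beta_gt0 sens; apply: ge_ereal_sup => _ [S [z [mS Dz pos1 pos2 ->]]].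
have L_ge0 : 0 <= `|M z - M (zero_at z i)| / beta by rewrite divr_ge0 // ltW.
rewrite lee_fin; apply: le_trans (abs_ln_ratio_le _ _ _ L_ge0 pos1 pos2 _ _) _.
- exact: lap_prob_shift_le.
- by rewrite distrC; exact: lap_prob_shift_le.
- by rewrite ler_pM2r ?invr_gt0 // sens.
Qed.

Lemma sum_sub_zero_at {n : nat} (F : 'I_n -> R -> R) (z : 'rV[R]_n) (i : 'I_n) :
  (forall j, F j 0 = 0) ->
  \sum_(j < n) F j (z ord0 j) - \sum_(j < n) F j (zero_at z i ord0 j) = F i (z ord0 i).
Proof.
move=> F0; rewrite -sumrB (bigD1 i) //= big1 ?addr0.
  by rewrite /zero_at mxE eqxx F0 subr0.
by move=> j /negbTE ji; rewrite /zero_at mxE ji subrr.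
Qed.

End privacy.

Lemma sup_norm_ub {R : realType} {E : set R} :
  (exists M : R, forall x, E x -> `|x| <= M) ->
  forall x, E x -> `|x| <= sup [set `|y| | y in E].
Proof.
move=> [M EM] x Ex; apply: sup_upper_bound; last by exists x.
by split; [exists `|x|, x | exists M => _ [y Ey <-]; exact: EM].
Qed.

Lemma sup_norm_ge0 {R : realType} {E : set R} :
  (exists M : R, forall x, E x -> `|x| <= M) -> 0 <= sup [set `|y| | y in E].
Proof.
move=> EM; have [->|/set0P [x Ex]] := eqVneq E set0; first by rewrite image_set0 sup0.
exact: le_trans (normr_ge0 x) (sup_norm_ub EM x Ex).
Qed.

Lemma wnorm_single (R : realType) (n : nat) (a : R) (i : 'I_n) (q : 'rV[R]_n) :
  wnorm (fun j => (j == i)%:R * a) q = a * `|q ord0 i|.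
Proof.
rewrite /wnorm (bigD1 i) //= eqxx mul1r big1 ?addr0 // => j /negbTE ->.
by rewrite !mul0r.
Qed.

Lemma privacy_loss_K_mean_le {R : realType} {n : nat} (X : set R) (Q : query R n)
    (i : 'I_n) :
  (exists M : R, forall x, X x -> `|x| <= M) -> 0 < qb Q ->
  (privacy_loss X (K_mean Q) (qb Q) i <= (gammaX X * `|Q.1 ord0 i| / qb Q)%:E)%E.
Proof.
move=> hX qb_gt0; apply: privacy_loss_le => // z Xz; rewrite /K_mean.
rewrite (sum_sub_zero_at (fun j x => Q.1 ord0 j * x)) => [|j]; last by rewrite mulr0.
by rewrite normrM mulrC ler_wpM2r // (sup_norm_ub hX _ (Xz i)).
Qed.

Lemma privacy_loss_K'_mean_le {R : realType} {n : nat} (Y : set R) (gamma d b' : R)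
    (Q : query R n) (i : 'I_n) :
  (exists M : R, forall y, Y y -> `|y| <= M) -> 0 < b' -> 0 <= Pcoef gamma d b' Q ->
  (privacy_loss Y (K'_mean gamma d b' Q) b' i <=
   (Pcoef gamma d b' Q * deltaY Y * `|Q.1 ord0 i| / b')%:E)%E.
Proof.
move=> hY b'_gt0 Pcoef_ge0; apply: privacy_loss_le => // z Yz.
rewrite /K'_mean -mulrBr.
rewrite (sum_sub_zero_at (fun j x => x * `|Q.1 ord0 j|)) => [|j]; last by rewrite mul0r.
rewrite normrM (ger0_norm Pcoef_ge0) -mulrA ler_wpM2l // normrM normr_id ler_wpM2r //.
exact: sup_norm_ub hY _ (Yz i).
Qed.

Section price_and_payments.
Context {R : realType} {n : nat}.
Variables (gamma delta b' : R) (c : 'rV[R]_n).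
Hypothesis b'_gt0 : 0 < b'.

Lemma Eprice_wprice Q :
  Eprice gamma delta b' c Q = (wprice (fun j => gamma * b' / (b' - delta) * c ord0 j) Q)%:E.
Proof.
rewrite /Eprice; under eq_fun do rewrite -[X in _ + X]mulr1.
rewrite lapE_affine //; congr EFin.
rewrite /Pprice /K'_mean /Pcoef /wprice /wnorm.
under [in RHS]eq_bigr do rewrite -mulrA.
rewrite -mulr_sumr invfM; ring.
Qed.

Lemma Emicro_sensitivity i Q : Emicro gamma delta b' c i Q =
  (c ord0 i * (gamma * `|Q.1 ord0 i| / qb Q
               + Pcoef gamma delta b' Q * delta * `|Q.1 ord0 i| / b'))%:E.
Proof.
rewrite /Emicro /=.
under eq_fun do rewrite addrAC subrr add0r.
rewrite lapE_affine //; congr EFin; rewrite /Pcoef; ring.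
Qed.

Lemma Emicro_wprice i Q : delta < b' ->
  Emicro gamma delta b' c i Q =
  (wprice (fun j => (j == i)%:R * (gamma * b' / (b' - delta) * c ord0 i)) Q)%:E.
Proof.
move=> b'_delta; rewrite Emicro_sensitivity /wprice wnorm_single /Pcoef; congr EFin.
rewrite invfM; move: (qb Q)^-1 => qb_inv.
by field; rewrite !gt_eqF ?subr_gt0.
Qed.

End price_and_payments.

Theorem proposition12 (R : realType) (n : nat) (X Y : set R) (c : 'rV[R]_n)
    (b' : R)
    (hX : exists M : R, forall x, X x -> `|x| <= M)
    (hY0 : forall y, Y y -> 0 <= y)
    (hY : exists M : R, forall y, Y y -> `|y| <= M)
    (hc : forall i, Y (c ord0 i))
    (hb' : deltaY Y < b') :
  let gamma := gammaX X in
  let delta := deltaY Y in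
  [/\ arbitrage_free (Eprice gamma delta b' c),
      (forall (i : 'I_n) (Q : query R n), 0 < Q.2 -> Q.1 ord0 i = 0 ->
         Emicro gamma delta b' c i Q = 0%E),
      (forall i : 'I_n, arbitrage_free (Emicro gamma delta b' c i)),
      (forall Q : query R n, 0 < Q.2 ->
         (\sum_(i < n) Emicro gamma delta b' c i Q <= Eprice gamma delta b' c Q)%E)
    & (forall (i : 'I_n) (Q : query R n), 0 < Q.2 ->
         (Emicro gamma delta b' c i Q >=
          (c ord0 i)%:E *
          (privacy_loss X (K_mean Q) (qb Q) i
           + privacy_loss Y (K'_mean gamma delta b' Q) b' i))%E)].
Proof.
move=> gamma delta.
have gamma_ge0 : 0 <= gamma := sup_norm_ge0 hX.
have delta_ge0 : 0 <= delta := sup_norm_ge0 hY.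
have b'_delta : 0 < b' - delta by rewrite subr_gt0.
have b'_gt0 : 0 < b' := le_lt_trans delta_ge0 hb'.
have c_ge0 j : 0 <= c ord0 j := hY0 _ (hc j).
set kappa := gamma * b' / (b' - delta).
have kappa_ge0 : 0 <= kappa by rewrite divr_ge0 ?mulr_ge0 // ltW.
have Emicro_E i Q : Emicro gamma delta b' c i Q = (kappa * c ord0 i * `|Q.1 ord0 i| / qb Q)%:E.
  by rewrite Emicro_wprice // /wprice wnorm_single.
split.
- rewrite (funext (Eprice_wprice gamma delta b' c b'_gt0)).
  by apply: arbitrage_free_wprice => j; rewrite mulr_ge0.
- by move=> i Q _ q0; rewrite Emicro_E q0 normr0 mulr0 mul0r.
- move=> i; rewrite (funext (Emicro_wprice gamma delta b' c b'_gt0 i ^~ hb')).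
  by apply: arbitrage_free_wprice => j; rewrite mulr_ge0 ?ler0n // mulr_ge0.
- move=> Q _; rewrite Eprice_wprice //; under eq_bigr do rewrite Emicro_E.
  by rewrite sumEFin lee_fin /wprice /wnorm mulr_suml.
move=> i Q Q_gt0; rewrite Emicro_sensitivity // EFinM lee_wpmul2l ?lee_fin // EFinD.
have qb_gt0 : 0 < qb Q by rewrite sqrtr_gt0 divr_gt0.
apply: leeD; first exact: privacy_loss_K_mean_le.
by apply: privacy_loss_K'_mean_le; rewrite // /Pcoef divr_ge0 // mulr_ge0 // ltW.
Qed.
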